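(* Let $(\mathbf{D},\mathbf{E})$ be a semi-dual pair and let $f:\mathbf{X}\to\mathbf{Y}$ be a surjective homomorphism of $\mathbf{D}$-separated structures. Then the dual map $f^*:\mathbf{Y}^*\to\mathbf{X}^*$ defined by $f^*(y^* )=y^*\circ f$ is an embedding.
   Context: A structure is a set with constants, relations and (possibly partial) operations of a first-order language; homomorphisms preserve them; an embedding is an injective homomorphism $f$ with $R(f(x_0),\dots,f(x_{n-1}))\iff R(x_0,\dots,x_{n-1})$ for every relation $R$. For a finite structure $\mathbf{D}$, a structure is $\mathbf{D}$-separated if it embeds into some power of $\mathbf{D}$. Semi-dual pair: let $\mathcal L,\mathcal R$ be countable first-order languages, $\mathbf{D}$ a finite $\mathcal L$-model and $\mathbf{E}$ a finite $\mathcal R$-model with the same universe. $(\mathbf{D},\mathbf{E})$ is a semi-dual pair if for every finite $\mathbf{D}$-separated $\mathbf{X}$ with universe $X$: (S1) $\hom(\mathbf{X},\mathbf{D})$ is a substructure of $\mathbf{E}^X$; (S2) for every homomorphism $\phi$ from $\hom(\mathbf{X},\mathbf{D})$ (with the $\mathcal R$-structure induced from $\mathbf{E}^X$) into $\mathbf{E}$ there is $x\in X$ with $\phi(f)=f(x)$ for all $f$. For a $\mathbf{D}$-separated $\mathbf{X}$ with universe $X$, $\mathbf{X}^*$ denotes the set $\hom(\mathbf{X},\mathbf{D})$ of homomorphisms with the $\mathcal R$-structure induced from $\mathbf{E}^X$ (pointwise). *)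

From mathcomp Require Import all_boot.
From Stdlib Require Import ClassicalEpsilon.
Set Implicit Arguments. Unset Strict Implicit. Unset Printing Implicit Defensive.

Record language := Language {
  csym : countType;
  osym : countType;
  oar  : osym -> nat;
  rsym : countType;
  rar  : rsym -> nat }.

Record struct (L : language) (A : Type) := Struct {
  cst : csym L -> A;
  op  : forall o : osym L, ('I_(oar o) -> A) -> option A;
  rel : forall r : rsym L, ('I_(rar r) -> A) -> Prop }.

Arguments cst {L A} s c.
Arguments op {L A} s o a.
Arguments rel {L A} s r a.
Arguments Struct {L A} cst op rel.

Definition is_hom (L : language) (A B : Type) (SA : struct L A) (SB : struct L B)
  (h : A -> B) : Prop :=
  (forall c, h (cst SA c) = cst SB c) /\
  (forall o (a : 'I_(oar o) -> A) v, op SA o a = Some v ->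
     op SB o (fun k => h (a k)) = Some (h v)) /\
  (forall r (a : 'I_(rar r) -> A), rel SA r a -> rel SB r (fun k => h (a k))).
Arguments is_hom {L A B} SA SB h.

Definition is_emb (L : language) (A B : Type) (SA : struct L A) (SB : struct L B)
  (h : A -> B) : Prop :=
  is_hom SA SB h /\ injective h /\
  (forall r (a : 'I_(rar r) -> A), rel SB r (fun k => h (a k)) -> rel SA r a).
Arguments is_emb {L A B} SA SB h.

(* The power D^I (pointwise structure; a partial operation is defined at a
   tuple iff it is defined at every coordinate). *)
Definition pow_op (L : language) (T : Type) (D : struct L T) (I : Type)
  (o : osym L) (a : 'I_(oar o) -> I -> T) : option (I -> T) :=
  match excluded_middle_informative
          (forall i, exists v, op D o (fun k => a k i) = Some v) with
  | left H => Some (fun i => proj1_sig (constructive_indefinite_description _ (H i)))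
  | right _ => None
  end.
Arguments pow_op {L T} D I o a.

Definition pow (L : language) (T : Type) (D : struct L T) (I : Type) : struct L (I -> T) :=
  Struct (fun c _ => cst D c) (pow_op D I)
    (fun r a => forall i, rel D r (fun k => a k i)).
Arguments pow {L T} D I.

Definition Dsep (L : language) (T : Type) (D : struct L T) (A : Type) (SA : struct L A) : Prop :=
  exists (I : Type) (e : A -> I -> T), is_emb SA (pow D I) e.
Arguments Dsep {L T} D {A} SA.

(* On the subset {b | P b} the
   induced structure has: the constant c iff cst c lies in P; op o defined at
   a tuple iff defined in B with value in P; relations restricted. *)
Definition sub_hom (R : language) (B B' : Type) (SB : struct R B) (P : B -> Prop)
  (SB' : struct R B') (P' : B' -> Prop) (g : {b : B | P b} -> B') : Prop :=
  (forall b, P' (g b)) /\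
  (forall c (Hc : P (cst SB c)), g (exist _ (cst SB c) Hc) = cst SB' c) /\
  (forall o (a : 'I_(oar o) -> {b : B | P b}) v (Hv : P v),
     op SB o (fun k => sval (a k)) = Some v ->
     op SB' o (fun k => g (a k)) = Some (g (exist _ v Hv))) /\
  (forall r (a : 'I_(rar r) -> {b : B | P b}),
     rel SB r (fun k => sval (a k)) -> rel SB' r (fun k => g (a k))).
Arguments sub_hom {R B B'} SB P SB' P' g.

Definition sub_emb (R : language) (B B' : Type) (SB : struct R B) (P : B -> Prop)
  (SB' : struct R B') (P' : B' -> Prop) (g : {b : B | P b} -> B') : Prop :=
  sub_hom SB P SB' P' g /\
  (forall b1 b2, g b1 = g b2 -> b1 = b2) /\
  (forall r (a : 'I_(rar r) -> {b : B | P b}),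
     rel SB' r (fun k => g (a k)) -> rel SB r (fun k => sval (a k))).
Arguments sub_emb {R B B'} SB P SB' P' g.

(* X^* = hom(X, D) as a subset of E^X (with the induced R-structure). *)
Definition dual_set (L : language) (T : Type) (D : struct L T) (A : Type) (SA : struct L A)
  : (A -> T) -> Prop := fun h => is_hom SA D h.
Arguments dual_set {L T} D {A} SA h.

Definition semi_dual_pair (L R : language) (T : finType) (D : struct L T) (E : struct R T)
  : Prop :=
  forall (A : finType) (SA : struct L A), Dsep D SA ->
    (* (S1) hom(X,D) is a substructure of E^X *)
    ((forall c, dual_set D SA (cst (pow E A) c)) /\
     (forall o (a : 'I_(oar o) -> A -> T) v,
        (forall k, dual_set D SA (a k)) -> op (pow E A) o a = Some v ->
        dual_set D SA v)) /\
    (* (S2) every homomorphism X^* -> E is an evaluation *)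
    (forall phi : {h : A -> T | dual_set D SA h} -> T,
       sub_hom (pow E A) (dual_set D SA) E (fun _ => True) phi ->
       exists x : A, forall h, phi h = sval h x).
Arguments semi_dual_pair {L R T} D E.

Definition dual_map (L : language) (T : Type) (D : struct L T) (X Y : Type)
  (SY : struct L Y) (f : X -> Y) : {h : Y -> T | dual_set D SY h} -> X -> T :=
  fun y => fun x => sval y (f x).

Arguments dual_map {L T} D {X Y} SY f y x.

From mathcomp Require Import all_boot.
From Stdlib Require Import ClassicalEpsilon FunctionalExtensionality ProofIrrelevance.

Set Implicit Arguments.
Unset Strict Implicit.
Unset Printing Implicit Defensive.

(* Precomposition with any map f : X -> Y is a homomorphism D^Y -> D^X, since
   the power structure is computed coordinatewise.  When f is onto, every
   coordinate of D^Y is a coordinate of D^X along f, so precomposition is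
   injective and reflects relations.  Restricting it to Y^* (which it maps
   into X^*, homomorphisms being closed under composition) keeps these
   properties. *)

Lemma is_hom_comp (L : language) (A B C : Type)
    (SA : struct L A) (SB : struct L B) (SC : struct L C) (f : A -> B) (g : B -> C) :
  is_hom SA SB f -> is_hom SB SC g -> is_hom SA SC (fun a => g (f a)).
Proof.
move=> [fc [fo fr]] [gc [go gr]]; split; [|split].
- by move=> c; rewrite fc gc.
- by move=> o a v /fo /go.
- by move=> r a /fr /gr.
Qed.

Section Precomposition.

Variables (L : language) (T : Type) (D : struct L T) (X Y : Type) (f : X -> Y).

Lemma pow_op_precomp o (a : 'I_(oar o) -> Y -> T) v :
  pow_op D Y o a = Some v -> pow_op D X o (fun k x => a k (f x)) = Some (fun x => v (f x)).
Proof.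
rewrite /pow_op.
case: excluded_middle_informative => [defY [<-] | //].
case: excluded_middle_informative => [defX | undefX]; last first.
  by case: undefX => x; exact: defY.
congr Some; apply: functional_extensionality => x.
case: (constructive_indefinite_description _ (defX x)) => w1 /= H1.
case: (constructive_indefinite_description _ (defY (f x))) => w2 /= H2.
by move: H1; rewrite H2 => -[].
Qed.

Lemma pow_precomp_hom :
  is_hom (pow D Y) (pow D X) (fun g x => g (f x)).
Proof.
split; [by [] | split].
- exact: pow_op_precomp.
- by move=> r a Ha x; exact: Ha.
Qed.

Hypothesis f_onto : forall y : Y, exists x : X, f x = y.

Lemma pow_precomp_emb :
  is_emb (pow D Y) (pow D X) (fun g x => g (f x)).
Proof.
split; [exact: pow_precomp_hom | split].
- move=> g1 g2 eq_gf; apply: functional_extensionality => y.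
  by have [x <-] := f_onto y; exact: (f_equal (fun g => g x) eq_gf).
- by move=> r a Ha y; have [x <-] := f_onto y; exact: Ha.
Qed.

End Precomposition.

Lemma sub_emb_restrict (R : language) (B B' : Type) (SB : struct R B) (SB' : struct R B')
    (P : B -> Prop) (P' : B' -> Prop) (g : B -> B') :
  is_emb SB SB' g -> (forall b, P b -> P' (g b)) ->
  sub_emb SB P SB' P' (fun b => g (sval b)).
Proof.
move=> [[gc [go gr]] [g_inj g_refl]] gP; split; [split; [|split; [|split]] | split].
- by case=> b Pb; exact: gP.
- by move=> c Pc /=; exact: gc.
- by move=> o a v Pv /go.
- by move=> r a /gr.
- move=> [b1 P1] [b2 P2] /= /g_inj eq_b; subst b2.
  by rewrite (proof_irrelevance _ P1 P2).
- by move=> r a /g_refl.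
Qed.

Theorem mainTheorem2 (L R : language) (T : finType) (D : struct L T) (E : struct R T)
  (HDE : semi_dual_pair D E)
  (X Y : Type) (SX : struct L X) (SY : struct L Y)
  (HX : Dsep D SX) (HY : Dsep D SY)
  (f : X -> Y) (hf : is_hom SX SY f) (sf : forall y : Y, exists x : X, f x = y) :
  sub_emb (pow E Y) (dual_set D SY) (pow E X) (dual_set D SX) (dual_map D SY f).
Proof.
apply: sub_emb_restrict (pow_precomp_emb E sf) _.
by move=> h h_hom; exact: is_hom_comp hf h_hom.
Qed.
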